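(* Let $c\geq 1$ be a real number and let $G$ be a finite graph whose growth satisfies $f_G(r)\leq cr$ for every positive integer $r$. Then $\operatorname{sep}_{1-\frac{1}{4c}}(G) < 2c$.
   Context: All graphs are finite. The growth of $G$ is the function $f_G\colon\mathbb{N}\to\mathbb{N}$ where $f_G(r)$ is the maximum of $|V(H)|$ over all subgraphs $H$ of $G$ of radius at most $r$. A separation of a graph $H$ is a pair $(A,B)$ of subsets of $V(H)$ with $A\cup B = V(H)$ such that no edge of $H$ has one end in $A\setminus B$ and the other in $B\setminus A$; its order is $|A\cap B|$. For $\alpha\in[\frac23,1)$, a separation $(A,B)$ of an $n$-vertex graph is $\alpha$-balanced if $|A\setminus B|\leq \alpha n$ and $|B\setminus A|\leq\alpha n$. The $\alpha$-separation number $\operatorname{sep}_\alpha(G)$ is the smallest integer $s$ such that every subgraph of $G$ has an $\alpha$-balanced separation of order at most $s$. *)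

From mathcomp Require Import all_boot all_order all_algebra.
From mathcomp Require Import reals.
Set Implicit Arguments. Unset Strict Implicit. Unset Printing Implicit Defensive.
Import Order.TTheory GRing.Theory Num.Theory.

(* A subgraph H of G is a pair (S, E): a vertex set S and a symmetric set of
   ordered pairs E (each undirected edge {x,y} stored as (x,y) and (y,x)),
   all of which are edges of G with both ends in S. *)
Section Graphs.
Variable T : finType.
Variable e : rel T.

Definition is_subgraph (S : {set T}) (E : {set T * T}) : bool :=
  [forall p in E, [&& e p.1 p.2, p.1 \in S, p.2 \in S & (p.2, p.1) \in E]].

Fixpoint ball (E : {set T * T}) (v : T) (k : nat) : {set T} :=
  if k is k'.+1 then
    ball E v k' :|: [set y | [exists x in ball E v k', (x, y) \in E]]
  else [set v].

Definition radius_le (S : {set T}) (E : {set T * T}) (r : nat) : bool :=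
  [exists v in S, S \subset ball E v r].

Definition growth (r : nat) : nat :=
  \max_(S : {set T}) \max_(E : {set T * T} | is_subgraph S E && radius_le S E r)
     #|S|.

Definition is_separation (S : {set T}) (E : {set T * T}) (A B : {set T}) : bool :=
  (A :|: B == S) &&
  [forall p in E, ~~ ((p.1 \in A :\: B) && (p.2 \in B :\: A))].

Definition sep_order (A B : {set T}) : nat := #|A :&: B|.

Variable R : realType.

Definition balanced (alpha : R) (S A B : {set T}) : bool :=
  ((#|A :\: B|%:R <= alpha * #|S|%:R)%R && (#|B :\: A|%:R <= alpha * #|S|%:R)%R).

Definition sep_ok (alpha : R) (s : nat) : bool :=
  [forall S : {set T}, forall E : {set T * T},
     is_subgraph S E ==>
     [exists A : {set T}, exists B : {set T},
        [&& is_separation S E A B, balanced alpha S A B & sep_order A B <= s]]].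

(* For alpha >= 0 the value
   s = #|T| always works (A = B = V(H)), so the minimum below is taken over a
   range containing a witness and is the genuine minimum. *)
Definition sep_number (alpha : R) : nat :=
  \big[minn/#|T|]_(s < #|T|.+1 | sep_ok alpha s) (s : nat).

End Graphs.

From mathcomp Require Import all_boot all_order all_algebra.
From mathcomp Require Import reals ring lra.
Import Order.TTheory GRing.Theory Num.Theory.
Set Implicit Arguments. Unset Strict Implicit. Unset Printing Implicit Defensive.

(* Let H be a subgraph with n vertices and put q = n / (4c), so that a
   separation is balanced when both sides have at most n - q vertices.
   If some ball B_r(v) of H has at least q vertices, take r least.  For r = 0
   we have n <= 4c and ({v}, V(H)) works.  Otherwise the growth bound keeps
   B_i(v) below n - q for r - 1 <= i <= 2(r - 1), and since B_{r-1}(v) already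
   has at least r vertices, the layers B_{i+1}(v) \ B_i(v) cannot all have 2c
   vertices or more without B_{2r-1}(v) violating the growth bound; a thin
   layer gives the separation (B_{i+1}(v), V(H) \ B_i(v)).  If all balls have
   fewer than q vertices, then so do all components, and a union of components
   with between n/4 and n/4 + q vertices is a balanced separation of order 0. *)

Section Balls.
Variables (T : finType) (E : {set T * T}) (v : T).

Lemma ball_mono i j : (i <= j)%N -> ball E v i \subset ball E v j.
Proof.
move=> /subnK <-; elim: (j - i)%N => [|d IH] //=.
exact: subset_trans IH (subsetUl _ _).
Qed.

Lemma ball_center k : v \in ball E v k.
Proof. by apply: subsetP (ball_mono (leq0n k)) _ _; rewrite set11. Qed.

Lemma ball_step k x y : x \in ball E v k -> (x, y) \in E -> y \in ball E v k.+1.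
Proof. by move=> xk xyE; rewrite /= !inE; apply/orP; right; apply/exists_inP; exists x. Qed.

Lemma ballSP k y :
  y \in ball E v k.+1 -> y \in ball E v k \/ exists2 x, x \in ball E v k & (x, y) \in E.
Proof. by rewrite /= !inE => /orP [|/exists_inP]; [left | right]. Qed.

Lemma leq_card_ball i j : (i <= j)%N -> (#|ball E v i| <= #|ball E v j|)%N.
Proof. by move=> ij; apply/subset_leq_card/ball_mono. Qed.

Lemma ball_stable k i :
  ball E v k.+1 = ball E v k -> (k <= i)%N -> ball E v i = ball E v k.
Proof.
move=> stable /subnK <-; elim: (i - k)%N => // d IH.
by rewrite addSn -stable /= IH.
Qed.

Lemma ltn_card_ball m i :
  (#|ball E v m| < #|ball E v m.+1|)%N -> (i <= m.+1)%N -> (i < #|ball E v i|)%N.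
Proof.
move=> grows; elim: i => [|i IH] im; first by rewrite cards1.
apply: leq_ltn_trans (IH (ltnW im)) _; rewrite ltn_neqAle leq_card_ball // andbT.
apply/eqP => card_eq.
have stable : ball E v i.+1 = ball E v i.
  by apply/esym/eqP; rewrite eqEcard ball_mono //= card_eq.
by move: grows; rewrite (ball_stable stable im) (ball_stable stable (ltnW im)) ltnn.
Qed.

Definition component := ball E v #|T|.

Lemma ballS_component : ball E v #|T|.+1 = component.
Proof.
apply/esym/eqP; rewrite eqEcard ball_mono //= leqNgt; apply/negP => grows.
have := ltn_card_ball grows (leqnn _).
by rewrite ltnNge (leq_trans (max_card _) (leqnSn _)).
Qed.

End Balls.

Section Subgraph.
Variables (T : finType) (e : rel T) (S : {set T}) (E : {set T * T}).
Hypothesis subgE : is_subgraph e S E.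

Lemma subgraph_edge x y :
  (x, y) \in E -> [/\ e x y, x \in S, y \in S & (y, x) \in E].
Proof. by move/(forall_inP subgE)/and4P. Qed.

Lemma ball_subset v k : v \in S -> ball E v k \subset S.
Proof.
move=> vS; elim: k => [|k IH]; first by rewrite sub1set.
by apply/subsetP => y /ballSP [/(subsetP IH) // | [x _ /subgraph_edge []]].
Qed.

Lemma card_ball_le_growth v r : (#|ball E v r| <= growth e r)%N.
Proof.
pose B := ball E v r; pose EB := [set p in E | (p.1 \in B) && (p.2 \in B)].
have subgB : is_subgraph e B EB.
  apply/forall_inP => -[x y]; rewrite inE => /and3P [/subgraph_edge [exy _ _ yxE] xB yB].
  by rewrite /= exy xB yB inE yxE xB yB.
have radB : radius_le B EB r.
  apply/exists_inP; exists v; first exact: ball_center.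
  suff ball_sub k : (k <= r)%N -> ball E v k \subset ball EB v k by exact: ball_sub.
  elim: k => [|k IH] kr //; have xkB := subsetP (IH (ltnW kr)).
  apply/subsetP => y /ballSP [/xkB yk | [x xk xyE]].
    exact: subsetP (ball_mono _ _ (leqnSn k)) _ yk.
  apply: ball_step (xkB _ xk) _; rewrite inE xyE /=.
  rewrite (subsetP (ball_mono _ _ (ltnW kr)) _ xk).
  exact: subsetP (ball_mono _ _ kr) _ (ball_step xk xyE).
apply: leq_trans _ (leq_bigmax B).
by apply: (leq_bigmax_cond EB); rewrite subgB radB.
Qed.

Definition edge_closed (X : {set T}) :=
  (X \subset S) && [forall p in E, (p.1 \in X) ==> (p.2 \in X)].

Lemma edge_closed_subset X : edge_closed X -> X \subset S.
Proof. by case/andP. Qed.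

Lemma edge_closedP X x y : edge_closed X -> (x, y) \in E -> x \in X -> y \in X.
Proof. by move=> /andP [_ /forall_inP closedX] /closedX /implyP. Qed.

Lemma edge_closed0 : edge_closed set0.
Proof. by rewrite /edge_closed sub0set; apply/forall_inP => p _; rewrite inE. Qed.

Lemma edge_closedU X Y : edge_closed X -> edge_closed Y -> edge_closed (X :|: Y).
Proof.
move=> closedX closedY.
rewrite /edge_closed subUset !edge_closed_subset //=.
apply/forall_inP => -[x y] xyE; rewrite !inE; apply/implyP.
by case/orP => [/(edge_closedP closedX xyE) | /(edge_closedP closedY xyE)] ->; rewrite ?orbT.
Qed.

Lemma edge_closed_component v : v \in S -> edge_closed (component E v).
Proof.
move=> vS; rewrite /edge_closed ball_subset //=.
by apply/forall_inP => -[x y] xyE; apply/implyP => xT; rewrite -ballS_component (ball_step xT).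
Qed.

Lemma disjoint_ball_edge_closed v X k :
  edge_closed X -> v \notin X -> [disjoint ball E v k & X].
Proof.
move=> closedX vX; elim: k => [|k IH]; first by rewrite disjoints1.
rewrite disjoint_subset; apply/subsetP => y /ballSP [yk | [x xk xyE]].
  by rewrite inE (disjointFr IH yk).
have [_ _ _ yxE] := subgraph_edge xyE.
by rewrite inE; apply: contraFN (disjointFr IH xk) => /(edge_closedP closedX yxE).
Qed.

Definition has_sep (a b s : nat) := exists A B,
  [/\ is_separation S E A B, #|A :\: B| = a, #|B :\: A| = b & #|A :&: B| = s].

Lemma singleton_sep v : v \in S -> has_sep 0 (#|S| - 1) 1.
Proof.
move=> vS; exists [set v], S; split.
- rewrite /is_separation (setUidPr _) ?sub1set // eqxx andTb.
  apply/forall_inP => -[x y] _ /=; rewrite !inE.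
  by apply/negP => /andP [/andP [xS /eqP xv] _]; rewrite xv vS in xS.
- by apply/eqP; rewrite cards_eq0 setD_eq0 sub1set.
- by rewrite cardsD (setIidPr _) ?cards1 // sub1set.
- by rewrite (setIidPl _) ?cards1 // sub1set.
Qed.

Lemma ball_layer_sep v k : v \in S ->
  has_sep #|ball E v k| (#|S| - #|ball E v k.+1|) (#|ball E v k.+1| - #|ball E v k|).
Proof.
move=> vS; have kk1 := ball_mono E v (leqnSn k); have k1S := ball_subset k.+1 vS.
have kS := subset_trans kk1 k1S.
exists (ball E v k.+1), (S :\: ball E v k); split.
- apply/andP; split.
    by rewrite -(setUidPl kk1) -setUA -{1}(setIidPr kS) setID (setUidPr k1S).
  apply/forall_inP => -[x y] xyE; apply/negP => /andP [/setDP [_ xB] /setDP [_ yA]].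
  have [_ xS _ _] := subgraph_edge xyE.
  have xk : x \in ball E v k by apply: contraNT xB => xk; rewrite inE xk xS.
  by rewrite (ball_step xk xyE) in yA.
- rewrite setDDr (setIidPr kk1); suff -> : ball E v k.+1 :\: S = set0 by rewrite set0U.
  by apply/eqP; rewrite setD_eq0.
- by rewrite setDDl (setUidPr kk1) cardsD (setIidPr k1S).
- by rewrite setIDA (setIidPl k1S) cardsD (setIidPr kk1).
Qed.

Lemma edge_closed_sep X : edge_closed X -> has_sep #|X| (#|S| - #|X|) 0.
Proof.
move=> closedX; have XS := edge_closed_subset closedX.
exists X, (S :\: X); split.
- apply/andP; split; first by rewrite -{1}(setIidPr XS) setID.
  apply/forall_inP => -[x y] xyE; apply/negP => /andP [/setDP [xX _] /setDP [_ yX]].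
  by rewrite (edge_closedP closedX xyE xX) in yX.
- rewrite setDDr setIid; suff -> : X :\: S = set0 by rewrite set0U.
  by apply/eqP; rewrite setD_eq0.
- by rewrite setDDl setUid cardsD (setIidPr XS).
- by rewrite setIDA (setIidPl XS) setDv cards0.
Qed.

(* Add one component to a maximal union X of components with 4|X| < |S|. *)
Lemma quarter_edge_closed : (0 < #|S|)%N -> exists Y v,
  [/\ edge_closed Y, v \in S, (#|S| <= 4 * #|Y|)%N & (4 * #|Y| < #|S| + 4 * #|component E v|)%N].
Proof.
move=> S_gt0; pose P X := edge_closed X && (4 * #|X| < #|S|)%N.
have P0 : P set0 by rewrite /P edge_closed0 cards0.
have [X /andP [closedX X4] Xmax] := @arg_maxnP _ set0 P (fun X => #|X|) P0.
have [v /setDP [vS vX]] : {v | v \in S :\: X}.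
  apply/sigW/set0Pn; rewrite -card_gt0 cardsD (setIidPr (edge_closed_subset closedX)) subn_gt0.
  by apply: leq_ltn_trans X4; rewrite leq_pmull.
set C := component E v.
have closedY : edge_closed (X :|: C) by apply/edge_closedU/edge_closed_component.
have cardY : #|X :|: C| = (#|X| + #|C|)%N.
  by rewrite cardsU disjoint_setI0 ?cards0 ?subn0 // disjoint_sym disjoint_ball_edge_closed.
exists (X :|: C), v; split=> //; last by rewrite cardY mulnDr ltn_add2r.
rewrite leqNgt; apply/negP => Y4; have := Xmax (X :|: C); rewrite /P closedY Y4 => /(_ isT).
rewrite cardY /= -[leqRHS]addn0 leq_add2l leqn0 cards_eq0 => /eqP C0.
have vC : v \in C := ball_center E v #|T|.
by rewrite C0 inE in vC.
Qed.

End Subgraph.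

Lemma sep_number_le (T : finType) (e : rel T) (R : realType) (alpha : R) s :
  sep_ok e alpha s -> (sep_number e alpha <= s)%N.
Proof.
move=> ok; rewrite /sep_number -minEnat.
have [sT | Ts] := ltnP s #|T|.+1.
  exact: (@bigmin_inf _ nat _ _ (Ordinal sT) _ _ _ ok (leqnn _)).
exact: leq_trans (@bigmin_le_id _ nat _ _ _ _ _) (ltnW Ts).
Qed.

Local Open Scope ring_scope.

Lemma sep_number_lt (T : finType) (e : rel T) (R : realType) (alpha x : R) :
  0 < x ->
  (forall S E, is_subgraph e S E -> exists A B,
     [&& is_separation S E A B, balanced alpha S A B & #|A :&: B|%:R < x]) ->
  (sep_number e alpha)%:R < x.
Proof.
move=> x_gt0 small.
have exP : exists s : nat, s%:R < x by exists 0%N.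
have bounded (s : nat) : s%:R < x -> (s <= Num.Def.archi_bound x)%N.
  move=> sx; rewrite ltnW // -(ltr_nat R).
  by apply: lt_trans sx _; apply: archi_boundP; rewrite ltW.
have [s sx maxs] := ex_maxnP exP bounded.
have ok : sep_ok e alpha s.
  apply/forallP => S; apply/forallP => E; apply/implyP => /small [A [B /and3P [sepAB balAB ABx]]].
  by apply/existsP; exists A; apply/existsP; exists B; rewrite sepAB balAB /sep_order maxs.
by apply: le_lt_trans sx; rewrite ler_nat sep_number_le.
Qed.

Lemma exists_thin_layer (R : realType) (b : nat -> nat) (c q a : R) (k : nat) :
  1 <= c -> {homo b : i j / (i <= j)%N} ->
  (forall r, (0 < r)%N -> (b r)%:R <= c * r%:R) ->
  (k < b k)%N -> (b k)%:R < q -> 2 * c * q <= a ->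
  exists2 i, (k <= i)%N & ((b i)%:R <= a) && ((b i.+1)%:R - (b i)%:R < 2 * c).
Proof.
move=> c1 b_mono b_growth kb bkq qa.
have kbR : k.+1%:R <= (b k)%:R :> R by rewrite ler_nat.
have k_ge0 : 0 <= k%:R :> R by rewrite ler0n.
have b2k : (b (k + k)%N)%:R <= 2 * c * q.
  have [k0 | k_gt0] := posnP k; first by move: bkq kbR; rewrite k0 addn0 -natr1; nra.
  apply: le_trans (b_growth _ (ltn_addl _ k_gt0)) _.
  by rewrite -natr1 natrD in kbR *; nra.
have b_le_a i : (i <= k + k)%N -> (b i)%:R <= a.
  by move=> ik; apply: le_trans (le_trans b2k qa); rewrite ler_nat b_mono.
have grow t : (t <= k.+1)%N -> (exists2 i, (k <= i)%N &
    ((b i)%:R <= a) && ((b i.+1)%:R - (b i)%:R < 2 * c))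
    \/ (b k)%:R + 2 * c * t%:R <= (b (k + t)%N)%:R.
  elim: t => [|t IH] tk; first by right; rewrite addn0 mulr0 addr0.
  have [thin | thick] := ltrP ((b (k + t)%N.+1)%:R - (b (k + t)%N)%:R) (2 * c).
    by left; exists (k + t)%N; rewrite ?leq_addr // b_le_a ?leq_add2l.
  case: (IH (ltnW tk)) => [|grown]; first by left.
  by right; rewrite addnS -natr1; lra.
case: (grow k.+1 (leqnn _)) => // grown; exfalso.
have := b_growth _ (ltn_addl k (ltn0Sn k)).
by move: grown kbR; rewrite addnS -!natr1 natrD; nra.
Qed.

Section SmallSeparations.
Variables (R : realType) (c : R) (T : finType) (e : rel T).
Hypothesis growth_linear : forall r : nat, (0 < r)%N -> (growth e r)%:R <= c * r%:R.

Definition small_balanced_sep (S : {set T}) (E : {set T * T}) := exists A B,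
  [&& is_separation S E A B, balanced (1 - 1 / (4 * c)) S A B & #|A :&: B|%:R < 2 * c].

Lemma small_balanced_sep_of_has_sep (S : {set T}) (E : {set T * T}) (q : R) (a b s : nat) :
  1 <= c -> q * (4 * c) = #|S|%:R -> has_sep S E a b s ->
  a%:R <= #|S|%:R - q -> b%:R <= #|S|%:R - q -> s%:R < 2 * c ->
  small_balanced_sep S E.
Proof.
move=> c_ge1 q4c [A [B [sepAB <- <- <-]]] ha hb hs; exists A, B; rewrite /balanced.
have -> : (1 - 1 / (4 * c)) * #|S|%:R = #|S|%:R - q.
  by rewrite -q4c; field; rewrite gt_eqF // (lt_le_trans ltr01 c_ge1).
by rewrite sepAB ha hb hs.
Qed.

Lemma small_balanced_sep_of_large_ball S E q v j :
  1 <= c -> is_subgraph e S E -> q * (4 * c) = #|S|%:R ->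
  v \in S -> q <= #|ball E v j|%:R -> small_balanced_sep S E.
Proof.
move=> c_ge1 subgE q4c vS bigj; have n_ge0 : 0 <= #|S|%:R :> R := ler0n _ _.
have q_le : 4 * q <= #|S|%:R by nra.
have [m bigm minm] := ex_minnP (ex_intro (fun i => q <= #|ball E v i|%:R) j bigj).
case: m bigm minm => [|k] bigm minm.
  have n_gt0 : (0 < #|S|)%N by apply/card_gt0P; exists v.
  move: bigm; rewrite cards1 => q_le1.
  by apply: (small_balanced_sep_of_has_sep c_ge1 q4c (singleton_sep E vS)); rewrite ?natrB //; lra.
have bkq : #|ball E v k|%:R < q by have [//|/minm] := ltrP #|ball E v k|%:R q; rewrite ltnn.
have grows : (#|ball E v k| < #|ball E v k.+1|)%N by rewrite -(ltr_nat R); lra.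
have ball_linear r : (0 < r)%N -> #|ball E v r|%:R <= c * r%:R.
  move=> r_gt0; apply: le_trans (growth_linear r_gt0).
  by rewrite ler_nat (card_ball_le_growth subgE).
have qa : 2 * c * q <= #|S|%:R - q by nra.
have [i ki /andP [bi thin]] := exists_thin_layer c_ge1 (@leq_card_ball _ E v) ball_linear
  (ltn_card_ball grows (leqnSn k)) bkq qa.
apply: (small_balanced_sep_of_has_sep c_ge1 q4c (ball_layer_sep subgE i vS) bi).
  rewrite natrB ?subset_leq_card ?(ball_subset subgE i.+1 vS) //.
  suff : q <= #|ball E v i.+1|%:R by lra.
  by apply: le_trans bigm _; rewrite ler_nat leq_card_ball.
by rewrite natrB ?leq_card_ball.
Qed.

Lemma small_balanced_sep_of_small_components S E q :
  1 <= c -> is_subgraph e S E -> q * (4 * c) = #|S|%:R -> (0 < #|S|)%N ->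
  (forall v, v \in S -> #|component E v|%:R < q) -> small_balanced_sep S E.
Proof.
move=> c_ge1 subgE q4c S_gt0 small.
have [Y [v [closedY vS Y_ge Y_lt]]] := quarter_edge_closed subgE S_gt0.
have YS := subset_leq_card (edge_closed_subset closedY).
have := small v vS; move: Y_ge Y_lt; rewrite -(ler_nat R) -(ltr_nat R) natrD !natrM.
move=> Y_geR Y_ltR C_lt.
have q_gt0 : 0 < q := le_lt_trans (ler0n R _) C_lt.
have q_le : 4 * q <= #|S|%:R by rewrite -q4c; nra.
by apply: (small_balanced_sep_of_has_sep c_ge1 q4c (edge_closed_sep closedY));
  rewrite ?natrB //; lra.
Qed.

Lemma subgraph_small_balanced_sep S E :
  1 <= c -> is_subgraph e S E -> small_balanced_sep S E.
Proof.
move=> c_ge1 subgE; have [q q4c] : {q | q * (4 * c) = #|S|%:R}.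
  by exists (#|S|%:R / (4 * c)); rewrite divfK // mulf_neq0 // gt_eqF // (lt_le_trans ltr01 c_ge1).
have [S0 | S_gt0] := posnP #|S|.
  apply: (small_balanced_sep_of_has_sep c_ge1 q4c (edge_closed_sep (edge_closed0 S E)));
    by rewrite ?cards0 ?subn0; move: q4c; rewrite S0; nra.
have [/exists_inP [v vS big] | /exists_inPn small] :=
  boolP [exists v in S, q <= #|component E v|%:R].
  exact: small_balanced_sep_of_large_ball c_ge1 subgE q4c vS big.
by apply: (small_balanced_sep_of_small_components c_ge1 subgE q4c S_gt0) => v /small; rewrite ltNge.
Qed.

End SmallSeparations.

Unset Implicit Arguments.

Theorem lemma6 (R : realType) (c : R) (T : finType) (e : rel T)
  (e_sym : symmetric e) (e_irr : irreflexive e) (hc : 1 <= c)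
  (hgrowth : forall r : nat, (0 < r)%N -> (growth e r)%:R <= c * r%:R) :
  (sep_number e (1 - 1 / (4 * c)))%:R < 2 * c.
Proof.
apply: sep_number_lt; first by lra.
by move=> S E; apply: subgraph_small_balanced_sep hgrowth _ _ hc.
Qed.
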